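(* Let $p,\delta,\Delta$ be positive reals with $p<1$, let $n^-<n^+$ and $a$ be positive integers, and let $I=[n^-,n^+]$. Suppose that: (1) there is a function $f$ (differentiable on $I$) such that for each integer $n\in I$, $\Pr\big(\chi(G_{n,p})\in[f(n)-\Delta,f(n)+\Delta]\big)\ge0.99$; (2) for all real $n\in I$, $f'(n)\ge \frac1a+\delta$; (3) for each integer $n\in I$ there are integers $s_n,t_n$ with $\Pr\big(\chi(G_{n,p})\in[s_n,t_n]\big)\ge0.9$; (4) there is an increasing integer-valued function $r(n)$ such that for each integer $n\in I$ there is a coupling of $G_{n,p}$ and $G_{n+ar(n),p}$ with $\Pr\big(\chi(G_{n+ar(n),p})\le\chi(G_{n,p})+r(n)\big)\ge0.4$; (5) $n^+-n^-\ge 5\Delta/\delta$ and $n^+-n^-\ge 5a\,r(n^+)$. Then there is some integer $n\in I$ with $t_n-s_n>\frac{a\delta r(n)}{2}$.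
   Context: $G_{n,p}$ is the binomial random graph on $n$ labelled vertices with edge probability $p$; $\chi$ denotes chromatic number. A coupling of two random graphs is a joint probability space on which both are defined with their correct marginal distributions. *)

From HB Require Import structures.
From mathcomp Require Import all_boot all_order all_algebra.
From mathcomp Require Import all_classical all_reals all_analysis.
Set Implicit Arguments. Unset Strict Implicit. Unset Printing Implicit Defensive.
Import Order.TTheory GRing.Theory Num.Theory.
Local Open Scope ring_scope.

Definition is_graph (n : nat) (E : {set {set 'I_n}}) : bool :=
  [forall e in E, #|e| == 2%N].

Definition colorable (n : nat) (E : {set {set 'I_n}}) (k : nat) : bool :=
  [exists c : {ffun 'I_n -> 'I_k},
     [forall e in E, forall x in e, forall y in e, (x != y) ==> (c x != c y)]].

Lemma colorable_n (n : nat) (E : {set {set 'I_n}}) : exists k, colorable E k.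
Proof.
exists n; apply/existsP; exists [ffun x => x].
apply/forallP => e; apply/implyP => _; apply/forallP => x; apply/implyP => _.
apply/forallP => y; apply/implyP => _; apply/implyP; rewrite !ffunE; done.
Qed.

Definition chi (n : nat) (E : {set {set 'I_n}}) : nat :=
  ex_minn (colorable_n E).

Definition gnp_weight (R : realType) (p : R) (n : nat) (E : {set {set 'I_n}}) : R :=
  if is_graph E then p ^+ #|E| * (1 - p) ^+ ('C(n, 2) - #|E|) else 0.

Definition Pr_chi (R : realType) (p : R) (n : nat) (P : pred nat) : R :=
  \sum_(E : {set {set 'I_n}} | P (chi E)) gnp_weight p E.

Definition is_coupling (R : realType) (p : R) (n m : nat)
  (mu : {ffun {set {set 'I_n}} * {set {set 'I_m}} -> R}) : Prop :=
  (forall x, 0 <= mu x) /\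
  (forall E1, \sum_(E2 : {set {set 'I_m}}) mu (E1, E2) = gnp_weight p E1) /\
  (forall E2, \sum_(E1 : {set {set 'I_n}}) mu (E1, E2) = gnp_weight p E2).

Definition Pr_coupling (R : realType) (n m : nat)
  (mu : {ffun {set {set 'I_n}} * {set {set 'I_m}} -> R})
  (P : pred ({set {set 'I_n}} * {set {set 'I_m}})) : R :=
  \sum_(x | P x) mu x.

From HB Require Import structures.
From mathcomp Require Import all_boot all_order all_algebra.
From mathcomp Require Import all_classical all_reals all_analysis.
From mathcomp Require Import ring lra zify.
Import Order.TTheory GRing.Theory Num.Theory.
Local Open Scope ring_scope.

(** Suppose every window [s_n, t_n] has width at most a δ r(n) / 2 and follow
    the orbit n_0 = n⁻, n_(k+1) = n_k + a r(n_k).  By the union bound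
    (0.9 + 0.9 + 0.4 > 2) the coupling has an outcome where both chromatic
    numbers lie in their windows and χ grows by at most r(n_k); hence
    s_(n_(k+1)) and f(n_(k+1)) - Δ are at most t_(n_k) + r(n_k).  With the width
    bound, s stays along the orbit below the line of slope 1/a + δ/2 through
    (n⁻, f(n⁻) + Δ), and so does f - Δ.  As f has slope at least 1/a + δ, this
    forces δ (n_k - n⁻) <= 4Δ <= 4/5 δ (n⁺ - n⁻); since every step is at most
    a r(n⁺) <= (n⁺ - n⁻)/5, the strictly increasing orbit never leaves I, which
    is absurd. *)

Section FiniteMass.
Context {R : realFieldType} {T : finType} {w : T -> R}.
Hypothesis w_ge0 : forall x, 0 <= w x.
Hypothesis w_sum1 : \sum_x w x = 1.

Lemma mass_predI_ge (P Q : pred T) :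
  \sum_(x | P x) w x + \sum_(x | Q x) w x - 1 <= \sum_(x | P x && Q x) w x.
Proof.
have splitP : \sum_(x | P x) w x
    = \sum_(x | P x && Q x) w x + \sum_(x | P x && ~~ Q x) w x by rewrite (bigID Q).
have splitT : 1 = \sum_(x | Q x) w x + \sum_(x | ~~ Q x) w x.
  by rewrite -w_sum1 (bigID Q).
have sub : \sum_(x | P x && ~~ Q x) w x <= \sum_(x | ~~ Q x) w x.
  rewrite (eq_bigl (fun x => ~~ Q x && P x)) => [|x]; last exact: andbC.
  by rewrite big_mkcondr /=; apply: ler_sum => x _; case: (P x).
lra.
Qed.

Lemma mass_exists2 (P Q : pred T) :
  1 < \sum_(x | P x) w x + \sum_(x | Q x) w x -> exists x, P x && Q x.
Proof.
move=> gt1; have nz : \sum_(x | P x && Q x) w x <> 0.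
  by move=> eq0; have := mass_predI_ge P Q; lra.
by have [x /andP[PQx _]] := psumr_neq0P (fun x _ => w_ge0 x) nz; exists x.
Qed.

Lemma mass_exists3 (P Q C : pred T) :
  2 < \sum_(x | P x) w x + \sum_(x | Q x) w x + \sum_(x | C x) w x ->
  exists x, [&& P x, Q x & C x].
Proof.
move=> gt2; have [x /andP[/andP[Px Qx] Cx]] : exists x, (P x && Q x) && C x.
  by apply: mass_exists2; have := mass_predI_ge P Q; lra.
by exists x; rewrite Px Qx Cx.
Qed.

End FiniteMass.

Section Gnp.
Context {R : realType} (p : R) (n : nat).

Let present (e : {set 'I_n}) : R := if #|e| == 2%N then p else 0.
Let absent (e : {set 'I_n}) : R := if #|e| == 2%N then 1 - p else 1.

Lemma gnp_weight_prod (E : {set {set 'I_n}}) :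
  gnp_weight p E = \prod_e (if e \in E then present e else absent e).
Proof.
rewrite /gnp_weight; case: ifP => [graphE|/negbT/forallPn[e]]; last first.
  rewrite negb_imply => /andP[eE not_pair].
  by rewrite (bigD1 e) //= eE /present (negbTE not_pair) mul0r.
have pairE e : e \in E -> #|e| == 2%N.
  by move=> eE; move/forallP: graphE => /(_ e); rewrite eE.
rewrite (bigID (mem E)) /=; congr (_ * _).
  by rewrite -prodr_const; apply: eq_bigr => e eE; rewrite eE /present pairE.
rewrite (eq_bigr absent) => [|e /negbTE-> //].
rewrite /absent -big_mkcondr /= prodr_const; congr (_ ^+ _).
set pairs := [set e : {set 'I_n} | #|e| == 2%N].
have E_pairs : E \subset pairs by apply/fintype.subsetP => e /pairE; rewrite inE.
have -> : #|[pred e | (e \notin E) && (#|e| == 2%N)]| = #|pairs :\: E|.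
  by apply: eq_card => e; rewrite !inE.
by rewrite cardsD (finset.setIidPr E_pairs) /pairs card_draws card_ord.
Qed.

Lemma gnp_weight_sum1 : \sum_(E : {set {set 'I_n}}) gnp_weight p E = 1.
Proof.
rewrite (eq_bigr _ (fun E _ => gnp_weight_prod E)) -bigA_distr.
apply: big1 => e _; rewrite /present /absent /=.
by case: ifP => _; rewrite ?subrKC ?add0r.
Qed.

Lemma gnp_weight_ge0 (E : {set {set 'I_n}}) :
  0 <= p -> p <= 1 -> 0 <= gnp_weight p E.
Proof.
move=> p_ge0 p_le1; rewrite /gnp_weight; case: ifP => // _.
by rewrite mulr_ge0 // exprn_ge0 // subr_ge0.
Qed.

End Gnp.

Section Coupling.
Context {R : realType} {p : R} {n m : nat}.
Context {mu : {ffun {set {set 'I_n}} * {set {set 'I_m}} -> R}}.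
Hypothesis mu_coupling : is_coupling p mu.

Lemma Pr_coupling_fst (P : pred nat) :
  Pr_coupling mu (fun x => P (chi x.1)) = Pr_chi p n P.
Proof.
case: mu_coupling => _ [marg1 _]; rewrite /Pr_coupling /Pr_chi.
rewrite -(eq_bigr _ (fun E1 _ => marg1 E1)) pair_big_dep /=.
by apply: eq_big => [[E1 E2]|[E1 E2] _]; rewrite ?andbT.
Qed.

Lemma Pr_coupling_snd (P : pred nat) :
  Pr_coupling mu (fun x => P (chi x.2)) = Pr_chi p m P.
Proof.
case: mu_coupling => _ [_ marg2]; rewrite /Pr_coupling /Pr_chi.
rewrite -(eq_bigr _ (fun E2 _ => marg2 E2)) -exchange_big pair_big_dep /=.
by apply: eq_big => -[].
Qed.

Lemma coupling_sum1 : \sum_x mu x = 1.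
Proof.
case: mu_coupling => _ [marg1 _].
rewrite -(gnp_weight_sum1 p n) -(eq_bigr _ (fun E1 _ => marg1 E1)) pair_big /=.
by apply: eq_bigr => -[].
Qed.

End Coupling.

Definition in_window {R : numDomainType} (lo hi : R) : pred nat :=
  fun k => (lo <= k%:R) && (k%:R <= hi).

Lemma Pr_chi_int_window {R : realType} (p : R) n (lo hi : int) :
  Pr_chi p n (fun k => (lo <= k%:Z) && (k%:Z <= hi)) =
  Pr_chi p n (in_window (lo%:~R : R) hi%:~R).
Proof. by apply: eq_bigl => E; rewrite /in_window -!(ler_int R) -pmulrn. Qed.

Lemma windows_meet {R : realType} (p : R) n (lo1 hi1 lo2 hi2 c1 c2 : R) :
  0 <= p -> p <= 1 ->
  c1 <= Pr_chi p n (in_window lo1 hi1) -> c2 <= Pr_chi p n (in_window lo2 hi2) ->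
  1 < c1 + c2 -> lo1 <= hi2.
Proof.
move=> p_ge0 p_le1 Pr1 Pr2 c12.
have [E /andP[/andP[lo1E _] /andP[_ Ehi2]]] :
    exists E : {set {set 'I_n}},
      in_window lo1 hi1 (chi E) && in_window lo2 hi2 (chi E).
  apply: (mass_exists2 (fun E => gnp_weight_ge0 p n E p_ge0 p_le1)
                       (gnp_weight_sum1 p n)).
  rewrite /Pr_chi in Pr1 Pr2; lra.
exact: le_trans lo1E Ehi2.
Qed.

Lemma coupled_windows_le {R : realType} {p : R} {n m : nat}
    {mu : {ffun {set {set 'I_n}} * {set {set 'I_m}} -> R}} (r : nat)
    (lo1 hi1 lo2 hi2 c1 c2 c3 : R) :
  is_coupling p mu ->
  c1 <= Pr_chi p n (in_window lo1 hi1) -> c2 <= Pr_chi p m (in_window lo2 hi2) ->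
  c3 <= Pr_coupling mu (fun x => chi x.2 <= chi x.1 + r)%N ->
  2 < c1 + c2 + c3 -> lo2 <= hi1 + r%:R.
Proof.
move=> mu_coupling Pr1 Pr2 Pr3 c123.
rewrite -(Pr_coupling_fst mu_coupling) in Pr1.
rewrite -(Pr_coupling_snd mu_coupling) in Pr2.
have [x /and3P[/andP[_ hi1x] /andP[lo2x _] chi_le]] :
    exists x : {set {set 'I_n}} * {set {set 'I_m}},
    [&& in_window lo1 hi1 (chi x.1), in_window lo2 hi2 (chi x.2)
      & chi x.2 <= chi x.1 + r]%N.
  apply: (mass_exists3 mu_coupling.1 (coupling_sum1 mu_coupling)).
  rewrite /Pr_coupling in Pr1 Pr2 Pr3; lra.
have : (chi x.2)%:R <= (chi x.1)%:R + r%:R :> R by rewrite -natrD ler_nat.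
lra.
Qed.

Lemma derive1_lb_increment {R : realType} (f : R -> R) (c u v : R) :
  u <= v -> (forall x, u <= x <= v -> derivable f x 1 /\ c <= derive1 f x) ->
  c * (v - u) <= f v - f u.
Proof.
move=> uv fD.
have fD' x : x \in `[u, v] -> derivable f x 1 /\ c <= derive1 f x.
  by rewrite in_itv => /fD.
have [x /fD'[_ cx] ->] : exists2 x, x \in `[u, v] & f v - f u = derive1 f x * (v - u).
  apply: MVT_segment => // [x xuv|].
    rewrite derive1E; apply/derivableP.
    exact: (fD' x (subset_itv_oo_cc xuv)).1.
  by apply: derivable_within_continuous => x /fD'[].
by rewrite ler_wpM2r // subr_ge0.
Qed.

Section Orbit.
Context {R : realType} {f : R -> R} {s t : nat -> R} {r : nat -> nat}.
Context {nm np a : nat} {delta Delta : R}.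
Hypothesis delta_gt0 : 0 < delta.
Hypothesis a_gt0 : (0 < a)%N.
Hypothesis nm_le_np : (nm <= np)%N.
Hypothesis r_ndecr : forall m n, (m <= n)%N -> (r m <= r n)%N.
Hypothesis r_gt0 : forall n, (nm <= n <= np)%N -> (0 < r n)%N.
Hypothesis f_slope : forall x, nm%:R <= x <= np%:R ->
  derivable f x 1 /\ a%:R^-1 + delta <= derive1 f x.
Hypothesis s_nm_le : s nm <= f nm%:R + Delta.
Hypothesis jump_s_le : forall n, (nm <= n)%N -> (n + a * r n <= np)%N ->
  s (n + a * r n)%N <= t n + (r n)%:R.
Hypothesis jump_f_le : forall n, (nm <= n)%N -> (n + a * r n <= np)%N ->
  f (n + a * r n)%:R - Delta <= t n + (r n)%:R.
Hypothesis wide_Delta : 5 * Delta / delta <= (np - nm)%:R.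
Hypothesis wide_r : (5 * a * r np <= np - nm)%N.

Section Narrow.
Hypothesis narrow : forall n, (nm <= n <= np)%N ->
  t n - s n <= a%:R * delta * (r n)%:R / 2.

Let line (x : R) : R := f nm%:R + Delta + (a%:R^-1 + delta / 2) * (x - nm%:R).

Lemma line_jump n :
  line (n + a * r n)%:R = line n%:R + (r n)%:R + a%:R * delta * (r n)%:R / 2.
Proof. by rewrite /line natrD natrM; field; rewrite pnatr_eq0 -lt0n. Qed.

Lemma close_of_f_below_line x :
  (nm <= x <= np)%N -> f x%:R - Delta <= line x%:R ->
  (5 * (x - nm) <= 4 * (np - nm))%N.
Proof.
case/andP=> nm_x x_np fx_le.
have slope : (a%:R^-1 + delta) * (x%:R - nm%:R) <= f x%:R - f nm%:R.
  apply: derive1_lb_increment; first by rewrite ler_nat.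
  move=> y /andP[nm_y y_x]; apply: f_slope; by rewrite nm_y (le_trans y_x) ?ler_nat.
have near : delta * (x%:R - nm%:R) <= 4 * Delta by rewrite /line in fx_le; lra.
have wide : 5 * Delta <= (np%:R - nm%:R) * delta by rewrite -natrB // -ler_pdivrMr.
rewrite -(ler_nat R) !natrM !natrB // -(ler_pM2l delta_gt0).
lra.
Qed.

Lemma jump_le_np n : (nm <= n)%N -> (5 * (n - nm) <= 4 * (np - nm))%N ->
  (n + a * r n <= np)%N.
Proof.
move=> nm_n close; have n_np : (n <= np)%N by lia.
have : (a * r n <= a * r np)%N by rewrite leq_mul2l r_ndecr ?orbT.
by move: wide_r; rewrite -mulnA; lia.
Qed.

Let orbit_inv n :=
  [/\ (nm <= n)%N, (5 * (n - nm) <= 4 * (np - nm))%N & s n <= line n%:R].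

Lemma orbit_inv_jump n : orbit_inv n -> orbit_inv (n + a * r n).
Proof.
case=> nm_n close s_le; have J_np := jump_le_np n nm_n close.
have n_in : (nm <= n <= np)%N by lia.
have t_le : t n + (r n)%:R <= line (n + a * r n)%:R.
  by rewrite line_jump; have := narrow n n_in; lra.
split; first lia.
- apply: close_of_f_below_line; first lia.
  have := jump_f_le n nm_n J_np; lra.
- have := jump_s_le n nm_n J_np; lra.
Qed.

Let orbit k := iter k (fun n => n + a * r n)%N nm.

Lemma orbit_inv_iter k : (nm + k <= orbit k)%N /\ orbit_inv (orbit k).
Proof.
elim: k => [|k [k_le inv_k]].
  rewrite addn0; split=> //; split=> //; first by rewrite subnn.
  by rewrite /line subrr mulr0 addr0.
rewrite /orbit iterS -/(orbit k); split; last exact: orbit_inv_jump inv_k.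
have [nm_n close _] := inv_k.
have : (0 < a * r (orbit k))%N by rewrite muln_gt0 a_gt0 r_gt0 //; lia.
lia.
Qed.

Lemma not_all_windows_narrow : False.
Proof. have [+ [_ close _]] := orbit_inv_iter np.+1; lia. Qed.

End Narrow.

Lemma exists_wide_window :
  exists n, (nm <= n <= np)%N /\ a%:R * delta * (r n)%:R / 2 < t n - s n.
Proof.
apply: contrapT => none; apply: not_all_windows_narrow => n n_in.
by rewrite leNgt; apply/negP => wide; apply: none; exists n.
Qed.

End Orbit.

Theorem lemma18 (R : realType) (p delta Delta : R) (nm np a : nat)
  (f : R -> R) (s t : nat -> int) (r : nat -> nat) :
  0 < p -> p < 1 -> 0 < delta -> 0 < Delta ->
  (0 < nm)%N -> (nm < np)%N -> (0 < a)%N ->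
  (* (1) *)
  (forall n : nat, (nm <= n <= np)%N ->
     Pr_chi p n (fun k => (f n%:R - Delta <= k%:R) && (k%:R <= f n%:R + Delta))
       >= 99%:R / 100%:R) ->
  (* (2) f differentiable on I with f' >= 1/a + delta *)
  (forall x : R, nm%:R <= x <= np%:R ->
     derivable f x 1 /\ derive1 f x >= a%:R^-1 + delta) ->
  (* (3) *)
  (forall n : nat, (nm <= n <= np)%N ->
     Pr_chi p n (fun k => (s n <= k%:Z) && (k%:Z <= t n)) >= 9%:R / 10%:R) ->
  (* (4) r increasing, positive integer-valued, and the couplings *)
  (forall m n : nat, (m <= n)%N -> (r m <= r n)%N) ->
  (forall n : nat, (nm <= n <= np)%N -> (0 < r n)%N) ->
  (forall n : nat, (nm <= n <= np)%N ->
     exists mu : {ffun {set {set 'I_n}} * {set {set 'I_(n + a * r n)}} -> R},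
       is_coupling p mu /\
       Pr_coupling mu (fun x => (chi x.2 <= chi x.1 + r n)%N) >= 4%:R / 10%:R) ->
  (* (5) *)
  (np - nm)%:R >= 5%:R * Delta / delta ->
  (np - nm >= 5 * a * r np)%N ->
  exists n : nat, [/\ (nm <= n <= np)%N &
    (t n - s n)%:~R > a%:R * delta * (r n)%:R / 2%:R].
Proof.
move=> p_gt0 p_lt1 delta_gt0 _ _ nm_lt_np a_gt0 f_window f_slope st_window
  r_ndecr r_gt0 coupling wide_Delta wide_r.
have [p_ge0 p_le1] : 0 <= p /\ p <= 1 by split; apply: ltW.
have st_win n : (nm <= n <= np)%N ->
    9 / 10 <= Pr_chi p n (in_window ((s n)%:~R : R) (t n)%:~R).
  by move=> /st_window; rewrite Pr_chi_int_window.
have f_win n : (nm <= n <= np)%N ->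
    9 / 10 <= Pr_chi p n (in_window (f n%:R - Delta) (f n%:R + Delta)).
  by move=> /f_window; apply: le_trans; lra.
have jump_in n : (nm <= n)%N -> (n + a * r n <= np)%N ->
    (nm <= n <= np)%N /\ (nm <= n + a * r n <= np)%N by lia.
suff [n [n_in wide]] : exists n, (nm <= n <= np)%N /\
    a%:R * delta * (r n)%:R / 2 < (t n)%:~R - (s n)%:~R.
  by exists n; rewrite intrB.
apply: exists_wide_window delta_gt0 a_gt0 (ltnW nm_lt_np) r_ndecr r_gt0 f_slope _ _ _
  wide_Delta wide_r.
- have nm_in : (nm <= nm <= np)%N by rewrite leqnn ltnW.
  apply: windows_meet p_ge0 p_le1 (st_win nm nm_in) (f_win nm nm_in) _; lra.
- move=> n nm_n J_np; have [n_in J_in] := jump_in n nm_n J_np.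
  have [mu [mu_coupling mu_le]] := coupling n n_in.
  by apply: coupled_windows_le mu_coupling (st_win n n_in) (st_win _ J_in) mu_le _; lra.
- move=> n nm_n J_np; have [n_in J_in] := jump_in n nm_n J_np.
  have [mu [mu_coupling mu_le]] := coupling n n_in.
  by apply: coupled_windows_le mu_coupling (st_win n n_in) (f_win _ J_in) mu_le _; lra.
Qed.
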